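(* Let $n\ge0$ and $k\ge1$ be integers and let $T$ be a completely non-unitary contraction on a separable infinite-dimensional complex Hilbert space $\mathcal{H}$ such that $\mathcal{D}_T\subseteq\mathcal{D}_{T^*}$, $\dim\mathcal{D}_{T^*}<\infty$, $\dim\mathcal{D}_T=n+1$ and $\dim(\mathcal{D}_{T^*}\ominus\mathcal{D}_T)=k$. Assume there is an orthonormal basis $\{e_m\}_{m\ge0}$ of $\mathcal{H}$ and scalars $a_{ij}$ ($0\le i\le n+k$, $0\le j\le n$) such that $Te_j=\sum_{i=0}^{n+k}a_{ij}e_i$ for $0\le j\le n$ and $Te_j=e_{j+k}$ for $j\ge n+1$. Let $A_1=(a_{ij})_{0\le i,j\le n}$. Then $T$ has no non-zero eigenvalue if and only if for every eigenvector $(h_0,\dots,h_n)\in\mathbb{C}^{n+1}$ of $A_1$ corresponding to a non-zero eigenvalue, there exists $l\in\{1,\dots,k\}$ with $\sum_{r=0}^{n}a_{n+l,r}h_r\neq 0$.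
   Context: For a contraction $T$ on $\mathcal{H}$, $\mathcal{D}_T=\overline{(I-T^*T)^{1/2}\mathcal{H}}$ and $\mathcal{D}_{T^*}=\overline{(I-TT^* )^{1/2}\mathcal{H}}$. A contraction is completely non-unitary if it has no nonzero reducing subspace on which it is unitary. *)

From HB Require Import structures.
From mathcomp Require Import all_boot all_order all_algebra.
From mathcomp Require Import complex.
From mathcomp Require Import reals.
Set Implicit Arguments. Unset Strict Implicit. Unset Printing Implicit Defensive.
Import Order.TTheory GRing.Theory Num.Theory.
Local Open Scope ring_scope.

Section Hilbert.
Variables (R : realType) (V : lmodType R[i]) (ip : V -> V -> R[i]).

Definition hnorm (x : V) : R[i] := sqrtC (ip x x).

Definition is_inner_product : Prop :=
  [/\ forall (c : R[i]) (x y z : V), ip (c *: x + y) z = c * ip x z + ip y z,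
      forall x y : V, ip x y = Num.conj (ip y x),
      forall x : V, 0 <= ip x x
    & forall x : V, ip x x = 0 -> x = 0].

Definition cauchy_seq (u : nat -> V) : Prop :=
  forall eps : R[i], 0 < eps -> exists N : nat,
    forall p q : nat, (N <= p)%N -> (N <= q)%N -> hnorm (u p - u q) < eps.

Definition converges_to (u : nat -> V) (l : V) : Prop :=
  forall eps : R[i], 0 < eps -> exists N : nat,
    forall p : nat, (N <= p)%N -> hnorm (u p - l) < eps.

Definition is_hilbert : Prop :=
  is_inner_product /\
  forall u : nat -> V, cauchy_seq u -> exists l : V, converges_to u l.

Definition hclosure (A : V -> Prop) : V -> Prop :=
  fun x => forall eps : R[i], 0 < eps -> exists y : V, A y /\ hnorm (x - y) < eps.

Definition closed_subspace (M : V -> Prop) : Prop :=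
  [/\ M 0,
      forall (c : R[i]) (x y : V), M x -> M y -> M (c *: x + y)
    & forall x : V, hclosure M x -> M x].

Definition is_onb (e : nat -> V) : Prop :=
  (forall i j : nat, ip (e i) (e j) = (i == j)%:R) /\
  (forall x : V, (forall m : nat, ip x (e m) = 0) -> x = 0).

Definition is_adjoint (T Ts : V -> V) : Prop :=
  forall x y : V, ip (T x) y = ip x (Ts y).

Definition contraction (T : V -> V) : Prop :=
  forall x : V, hnorm (T x) <= hnorm x.

Definition is_pos_sqrt (S P : V -> V) : Prop :=
  [/\ forall x y : V, ip (S x) y = ip x (S y),
      forall x : V, 0 <= ip (S x) x
    & forall x : V, S (S x) = P x].

Definition sqrt_range_closure (P : V -> V) : V -> Prop :=
  fun x => exists S : V -> V, is_pos_sqrt S P /\ hclosure (fun y => exists z, y = S z) x.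

Definition defect (T Ts : V -> V) : V -> Prop :=
  sqrt_range_closure (fun x => x - Ts (T x)).
Definition defect_adj (T Ts : V -> V) : V -> Prop :=
  sqrt_range_closure (fun x => x - T (Ts x)).

Definition has_dim (W : V -> Prop) (d : nat) : Prop :=
  exists f : 'I_d -> V,
    (forall c : 'I_d -> R[i], \sum_(i < d) c i *: f i = 0 -> forall i, c i = 0) /\
    (forall x : V, W x <-> exists c : 'I_d -> R[i], x = \sum_(i < d) c i *: f i).

Definition ominus (W2 W1 : V -> Prop) : V -> Prop :=
  fun x => W2 x /\ forall y : V, W1 y -> ip x y = 0.

Definition completely_non_unitary (T Ts : V -> V) : Prop :=
  forall M : V -> Prop, closed_subspace M ->
    (forall x, M x -> M (T x)) -> (forall x, M x -> M (Ts x)) ->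
    (forall x, M x -> Ts (T x) = x /\ T (Ts x) = x) ->
    forall x, M x -> x = 0.

End Hilbert.

Definition has_nonzero_eigenvalue (R : realType) (V : lmodType R[i]) (T : V -> V) : Prop :=
  exists (lambda : R[i]) (x : V), [/\ lambda != 0, x != 0 & T x = lambda *: x].

(* Write c_m = <x, e_m>.  The matrix form of T determines its adjoint on the
   basis: T* e_(j+k) = e_j for j > n and T* e_i = sum_(j <= n) conj(a_ij) e_j for
   i <= n + k.  Hence T x = lambda x means lambda c_i = sum_(j <= n) a_ij c_j for
   i <= n + k, and c_j = lambda c_(j+k) for j > n.  A contraction has |lambda| <= 1,
   so |c_j| <= |c_(j+k)| <= |c_(j+2k)| <= ...; as the c_m are square-summable, all
   c_j with j > n vanish.  Thus the eigenvectors of T are exactly the vectors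
   sum_(j <= n) h_j e_j where h is an eigenvector of A1 (same eigenvalue) whose
   extra rows sum_r a_(n+l),r h_r (1 <= l <= k) vanish. *)

From HB Require Import structures.
From mathcomp Require Import all_boot all_order all_algebra.
From mathcomp Require Import complex.
From mathcomp Require Import reals.
Set Implicit Arguments. Unset Strict Implicit.
Import Order.TTheory GRing.Theory Num.Theory.
Local Open Scope ring_scope.

(* R[i] has no archimedean structure, so argue on real parts. *)
Lemma complex_natmul_unbounded (R : realType) (u w : R[i]) :
  0 < u -> 0 <= w -> exists N, w < u *+ N.
Proof.
move=> u_gt0 w_ge0.
have uE : ((complex.Re u)%:C)%C = u by apply/RRe_real/ger0_real/ltW.
have wE : ((complex.Re w)%:C)%C = w by apply/RRe_real/ger0_real.
have Reu_gt0 : 0 < complex.Re u by rewrite -ltcR rmorph0 uE.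
have Rew_ge0 : 0 <= complex.Re w by rewrite -lecR rmorph0 wE.
exists (Num.Def.archi_bound (complex.Re w / complex.Re u)).
rewrite -uE -wE -rmorphMn ltcR.
have := archi_boundP (divr_ge0 Rew_ge0 (ltW Reu_gt0)).
by rewrite ltr_pdivrMr // mulr_natl.
Qed.

Section InnerProduct.
Variables (R : realType) (V : lmodType R[i]) (ip : V -> V -> R[i]).
Hypothesis ipP : is_inner_product ip.

Lemma ip0l z : ip 0 z = 0.
Proof.
case: ipP => linl _ _ _; have := linl (-1) 0 0 z.
by rewrite scaleN1r oppr0 addr0 mulN1r addNr.
Qed.

Lemma ipZl c x z : ip (c *: x) z = c * ip x z.
Proof. by case: ipP => linl _ _ _; have := linl c x 0 z; rewrite !addr0 ip0l addr0. Qed.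

Lemma ipDl x y z : ip (x + y) z = ip x z + ip y z.
Proof. by case: ipP => linl _ _ _; rewrite -{1}(scale1r x) linl mul1r. Qed.

Lemma ipBl x y z : ip (x - y) z = ip x z - ip y z.
Proof. by rewrite ipDl -scaleN1r ipZl mulN1r. Qed.

Lemma ip_suml N (c : 'I_N -> R[i]) (f : 'I_N -> V) z :
  ip (\sum_(i < N) c i *: f i) z = \sum_(i < N) c i * ip (f i) z.
Proof.
elim: N c f => [|N IH] c f; first by rewrite !big_ord0 ip0l.
by rewrite !big_ord_recr /= ipDl ipZl IH.
Qed.

Lemma ip_conj x y : ip x y = (ip y x)^*.
Proof. by case: ipP. Qed.

Lemma ipZr c x z : ip z (c *: x) = c^* * ip z x.
Proof. by rewrite ip_conj ipZl rmorphM /= -ip_conj. Qed.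

Lemma ip_sumr N (c : 'I_N -> R[i]) (f : 'I_N -> V) z :
  ip z (\sum_(i < N) c i *: f i) = \sum_(i < N) (c i)^* * ip z (f i).
Proof.
rewrite ip_conj ip_suml rmorph_sum; apply: eq_bigr => i _.
by rewrite rmorphM /= -ip_conj.
Qed.

Lemma ip_ge0 x : 0 <= ip x x.
Proof. by case: ipP. Qed.

Lemma ip_gt0 x : x != 0 -> 0 < ip x x.
Proof.
case: ipP => _ _ _ def x0; rewrite lt_def ip_ge0 andbT.
by apply: contra x0 => /eqP/def ->.
Qed.

Lemma bessel N (f : 'I_N -> V) :
  (forall i j, ip (f i) (f j) = (i == j)%:R) ->
  forall x, \sum_(i < N) `|ip x (f i)| ^+ 2 <= ip x x.
Proof.
move=> fON x; set c := fun i => ip x (f i).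
set y := x - \sum_(i < N) c i *: f i.
have y_perp j : ip y (f j) = 0.
  rewrite ipBl ip_suml (bigD1 j) //= fON eqxx mulr1 big1 ?addr0 ?subrr //.
  by move=> i /negbTE ij; rewrite fON ij mulr0.
have yyE : ip y y = ip x x - \sum_(i < N) `|c i| ^+ 2.
  rewrite {2}/y ip_conj ipBl rmorphB /= -!ip_conj ip_sumr big1 ?subr0; last first.
    by move=> i _; rewrite y_perp mulr0.
  rewrite /y ipBl ip_suml; congr (_ - _); apply: eq_bigr => i _.
  by rewrite normCK -ip_conj.
by rewrite -subr_ge0 -yyE ip_ge0.
Qed.

(* Bessel's inequality forces the coordinates of a vector along an orthonormal
   sequence to be square-summable, so they cannot stay bounded away from 0. *)
Lemma orthonormal_coord_lbound_eq0 (u : nat -> V) x :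
  (forall i j, ip (u i) (u j) = (i == j)%:R) ->
  (forall j, `|ip x (u 0)| <= `|ip x (u j)|) -> ip x (u 0) = 0.
Proof.
move=> uON lb; apply/eqP; apply: contraT => c0.
have c_gt0 : 0 < `|ip x (u 0)| ^+ 2 by rewrite exprn_gt0 ?normr_gt0.
have [N] := complex_natmul_unbounded c_gt0 (ip_ge0 x).
move=> /lt_geF <-.
apply: le_trans (bessel (f := fun j : 'I_N => u j) _ x); last first.
  by move=> i j; rewrite uON.
rewrite -[N in _ *+ N]card_ord -sumr_const; apply: ler_sum => j _.
by rewrite lerXn2r ?nnegrE ?normr_ge0.
Qed.

Lemma contraction_eigenvalue_norm_le1 (T : V -> V) lam x :
  contraction ip T -> x != 0 -> T x = lam *: x -> `|lam| <= 1.
Proof.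
move=> contrT x0 Tx; have := contrT x.
rewrite /hnorm Tx ipZl ipZr mulrA -normCK ler_sqrtC; last 2 first.
- by rewrite nnegrE mulr_ge0 ?exprn_ge0 ?ip_ge0.
- by rewrite nnegrE ip_ge0.
rewrite ger_pMl ?ip_gt0 //.
by rewrite -{1}(expr1n _ 2) (ler_pXn2r _ (normr_ge0 _)) ?nnegrE ?ler01.
Qed.

Lemma total_coord_inj (e : nat -> V) :
  (forall x, (forall m, ip x (e m) = 0) -> x = 0) ->
  forall x y, (forall m, ip x (e m) = ip y (e m)) -> x = y.
Proof.
by move=> eT x y xy; apply/subr0_eq/eT => m; rewrite ipBl xy subrr.
Qed.

Lemma adjoint_ipl (T Ts : V -> V) : is_adjoint ip T Ts ->
  forall x y, ip (Ts x) y = ip x (T y).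
Proof. by move=> TsP x y; rewrite ip_conj -TsP -ip_conj. Qed.

Section OrthonormalBasis.
Variable e : nat -> V.
Hypothesis eON : forall i j, ip (e i) (e j) = (i == j)%:R.

Lemma ip_sum_orthonormal N (c : 'I_N -> R[i]) (m : 'I_N) :
  ip (\sum_(j < N) c j *: e j) (e m) = c m.
Proof.
rewrite ip_suml (bigD1 m) //= eON eqxx mulr1 big1 ?addr0 // => j jm.
by rewrite eON (inj_eq val_inj) (negbTE jm) mulr0.
Qed.

Lemma ip_sum_orthonormal_out N (c : 'I_N -> R[i]) m :
  (N <= m)%N -> ip (\sum_(j < N) c j *: e j) (e m) = 0.
Proof.
move=> Nm; rewrite ip_suml big1 // => j _.
by rewrite eON ltn_eqF ?mulr0 // (leq_trans (ltn_ord j)).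
Qed.

End OrthonormalBasis.
End InnerProduct.

Section BlockShift.
Variables (R : realType) (V : lmodType R[i]) (ip : V -> V -> R[i]).
Variables (n k : nat) (T Ts : {linear V -> V}) (e : nat -> V) (a : nat -> nat -> R[i]).
Hypothesis ipP : is_inner_product ip.
Hypothesis k_gt0 : (0 < k)%N.
Hypothesis TsP : is_adjoint ip T Ts.
Hypothesis eON : forall i j, ip (e i) (e j) = (i == j)%:R.
Hypothesis eT : forall x, (forall m, ip x (e m) = 0) -> x = 0.
Hypothesis Te_head : forall j, (j <= n)%N -> T (e j) = \sum_(i < n + k + 1) a i j *: e i.
Hypothesis Te_tail : forall j, (n < j)%N -> T (e j) = e (j + k).

Definition head_block : 'M[R[i]]_n.+1 := \matrix_(i < n.+1, j < n.+1) a i j.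

Definition head_coords (x : V) : 'cV[R[i]]_n.+1 := \col_(j < n.+1) ip x (e j).

Lemma Ts_e_tail j : (n < j)%N -> Ts (e (j + k)) = e j.
Proof.
move=> nj; apply: (total_coord_inj ipP eT) => m; rewrite (adjoint_ipl ipP TsP) eON.
have [mn | nm] := leqP m n.
  rewrite Te_head // (ip_conj ipP) (ip_sum_orthonormal_out ipP eON) ?rmorph0.
    by rewrite gtn_eqF // (leq_ltn_trans mn).
  by rewrite addn1 ltn_add2r.
by rewrite Te_tail // eON eqn_add2r.
Qed.

Lemma Ts_e_head i : (i < n + k + 1)%N -> Ts (e i) = \sum_(j < n.+1) (a i j)^* *: e j.
Proof.
move=> ink; apply: (total_coord_inj ipP eT) => m; rewrite (adjoint_ipl ipP TsP).
have [mn | nm] := leqP m n.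
  rewrite -ltnS in mn.
  rewrite Te_head // (ip_conj ipP) (ip_sum_orthonormal ipP eON _ (Ordinal ink)).
  by rewrite (ip_sum_orthonormal ipP eON _ (Ordinal mn)).
rewrite Te_tail // eON ltn_eqF ?(ip_sum_orthonormal_out ipP eON) //.
by rewrite (leq_trans ink) // addn1 ltn_add2r.
Qed.

Lemma ip_T_e_head x i :
  (i < n + k + 1)%N -> ip (T x) (e i) = \sum_(j < n.+1) a i j * ip x (e j).
Proof.
move=> ink; rewrite TsP Ts_e_head // (ip_sumr ipP).
by apply: eq_bigr => j _; rewrite conjCK.
Qed.

Lemma ip_T_e_tail x j : (n < j)%N -> ip (T x) (e (j + k)) = ip x (e j).
Proof. by move=> nj; rewrite TsP Ts_e_tail. Qed.

Lemma T_sum_head (h : 'I_n.+1 -> R[i]) :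
  T (\sum_(j < n.+1) h j *: e j) =
  \sum_(i < n + k + 1) (\sum_(j < n.+1) a i j * h j) *: e i.
Proof.
rewrite linear_sum (eq_bigr (fun j => \sum_(i < n + k + 1) (h j * a i j) *: e i)).
  rewrite exchange_big; apply: eq_bigr => i _.
  by rewrite scaler_suml; apply: eq_bigr => j _; rewrite mulrC.
move=> j _; rewrite linearZ /= Te_head; last exact: ltn_ord j.
by rewrite scaler_sumr; apply: eq_bigr => i _; rewrite scalerA.
Qed.

Lemma eigenvector_coord_tail_eq0 lam x m :
  contraction ip T -> x != 0 -> T x = lam *: x -> (n < m)%N -> ip x (e m) = 0.
Proof.
move=> contrT x0 Tx nm.
have lam_le1 := contraction_eigenvalue_norm_le1 ipP contrT x0 Tx.
have coord_le p : (n < p)%N -> `|ip x (e p)| <= `|ip x (e (p + k))|.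
  move=> np; rewrite -(ip_T_e_tail x np) Tx (ipZl ipP) normrM.
  by rewrite ler_piMl ?normr_ge0.
have /= := orthonormal_coord_lbound_eq0 ipP (u := fun j => e (m + j * k)) (x := x).
rewrite mul0n addn0; apply=> [i j | j]; first by rewrite eON eqn_add2l eqn_pmul2r.
elim: j => [|j IH]; first by rewrite mul0n addn0.
rewrite mulSnr addnA; apply: le_trans IH (coord_le _ _).
exact: leq_trans nm (leq_addr _ _).
Qed.

Lemma head_coords_neq0 lam x :
  contraction ip T -> x != 0 -> T x = lam *: x -> head_coords x != 0.
Proof.
move=> contrT x0 Tx; apply: contra (x0) => /eqP/matrixP coords0; apply/eqP/eT => m.
have [mn | nm] := leqP m n; last exact: eigenvector_coord_tail_eq0 contrT x0 Tx nm.
by rewrite -ltnS in mn; have := coords0 (Ordinal mn) ord0; rewrite !mxE.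
Qed.

Lemma head_coords_eigenvector lam x :
  T x = lam *: x -> head_block *m head_coords x = lam *: head_coords x.
Proof.
move=> Tx; apply/matrixP => i j; rewrite (ord1 j) !mxE -(ipZl ipP) -Tx.
rewrite ip_T_e_head; last by rewrite (leq_trans (ltn_ord i)) // addn1 ltnS leq_addr.
by apply: eq_bigr => r _; rewrite !mxE.
Qed.

Lemma head_coords_extra_rows lam x l :
  contraction ip T -> x != 0 -> T x = lam *: x -> (1 <= l <= k)%N ->
  \sum_(r < n.+1) a (n + l) r * head_coords x r ord0 = 0.
Proof.
move=> contrT x0 Tx /andP[l_gt0 lk].
transitivity (ip (T x) (e (n + l))).
  by rewrite ip_T_e_head ?addn1 ?ltnS ?leq_add2l //; apply: eq_bigr => r _; rewrite mxE.
by rewrite Tx (ipZl ipP) (eigenvector_coord_tail_eq0 contrT x0 Tx) ?mulr0 // -addn1 leq_add2l.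
Qed.

Lemma head_eigenvector_lift lam (h : 'cV[R[i]]_n.+1) :
  lam != 0 -> h != 0 -> head_block *m h = lam *: h ->
  (forall l, (1 <= l <= k)%N -> \sum_(r < n.+1) a (n + l) r * h r ord0 = 0) ->
  has_nonzero_eigenvalue T.
Proof.
move=> lam0 h0 Ah extra0; exists lam, (\sum_(j < n.+1) h j ord0 *: e j); split=> //.
  apply: contra h0 => /eqP x0; apply/eqP/matrixP => i j; rewrite (ord1 j) mxE.
  by rewrite -(ip_sum_orthonormal ipP eON (fun j => h j ord0) i) x0 (ip0l ipP).
rewrite T_sum_head.
have -> : (n + k + 1 = n.+1 + k)%N by rewrite addn1 addSn.
rewrite big_split_ord /= [X in _ + X]big1 ?addr0 => [|i _]; last first.
  by rewrite addSnnS extra0 ?scale0r //; exact: ltn_ord i.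
rewrite scaler_sumr; apply: eq_bigr => i _; rewrite scalerA.
have := congr1 (fun M : 'cV[R[i]]_n.+1 => M i ord0) Ah; rewrite !mxE => <-.
by congr (_ *: _); apply: eq_bigr => j _; rewrite mxE.
Qed.

End BlockShift.

Theorem lemma4p1 (R : realType) (V : lmodType R[i]) (ip : V -> V -> R[i])
    (n k : nat) (T Ts : {linear V -> V}) (e : nat -> V) (a : nat -> nat -> R[i]) :
  (1 <= k)%N ->
  is_hilbert ip ->
  is_adjoint ip T Ts ->
  contraction ip T ->
  completely_non_unitary ip T Ts ->
  (forall x, defect ip T Ts x -> defect_adj ip T Ts x) ->
  (exists d : nat, has_dim (defect_adj ip T Ts) d) ->
  has_dim (defect ip T Ts) n.+1 ->
  has_dim (ominus ip (defect_adj ip T Ts) (defect ip T Ts)) k ->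
  is_onb ip e ->
  (forall j : nat, (j <= n)%N -> T (e j) = \sum_(i < n + k + 1) a i j *: e i) ->
  (forall j : nat, (n < j)%N -> T (e j) = e (j + k)%N) ->
  let A1 : 'M[R[i]]_n.+1 := \matrix_(i < n.+1, j < n.+1) a i j in
  (~ has_nonzero_eigenvalue T <->
   forall (lambda : R[i]) (h : 'cV[R[i]]_n.+1),
     lambda != 0 -> h != 0 -> A1 *m h = lambda *: h ->
     exists l : nat, (1 <= l <= k)%N /\ \sum_(r < n.+1) a (n + l)%N r * h r ord0 != 0).
Proof.
move=> k_gt0 [ipP _] TsP contrT _ _ _ _ _ [eON eT] Te_head Te_tail A1; split.
  move=> no_eig lam h lam0 h0 Ah.
  pose extra l := \sum_(r < n.+1) a (n + l)%N r * h r ord0.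
  have [/hasP[l] | /hasPn extra0] := boolP (has (fun l => extra l != 0) (iota 1 k)).
    by rewrite mem_iota add1n ltnS => lk; exists l.
  case: no_eig; apply: (head_eigenvector_lift ipP eON Te_head lam0 h0 Ah) => l lk.
  by apply/eqP/negPn/extra0; rewrite mem_iota add1n ltnS.
move=> extra_neq0 [lam [x [lam0 x0 Tx]]].
have hx0 := head_coords_neq0 ipP k_gt0 TsP eON eT Te_head Te_tail contrT x0 Tx.
have Ahx := head_coords_eigenvector ipP TsP eON eT Te_head Te_tail Tx.
have [l [lk]] := extra_neq0 lam _ lam0 hx0 Ahx.
by rewrite (head_coords_extra_rows ipP k_gt0 TsP eON eT Te_head Te_tail contrT x0 Tx lk) eqxx.
Qed.
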